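(* Let $G$ be a complete $k$-partite graph ($k\ge 3$) on $n$ vertices with parts $V_1,\dots,V_k$, and let $w_0$ be any initial weighting. Then $S_{w_0}(i)=0$ for all but exactly one index $i$, and $$\mathcal{RC}(G,w_0)=n+S_{w_0}-1,\qquad\text{where } S_{w_0}=\sum_{i=1}^k S_{w_0}(i)=\max_{1\le i\le k}S_{w_0}(i).$$
   Context: Robot crawler model: let $G=(V,E)$ be a finite connected simple graph with $|V|=n$. An initial weighting is a bijection $w_0:V\to\{-n,-n+1,\dots,-1\}$. At time $1$ the crawler visits $w_0^{-1}(-n)$. If the crawler visits vertex $v$ at time $t$, then $w_t(v)=t$ and $w_t(u)=w_{t-1}(u)$ for all $u\neq v$. If $\min_{y\in V}w_t(y)>0$, the process stops and $\mathcal{RC}(G,w_0):=t$. Otherwise, at time $t+1$ the crawler moves to the neighbour $u$ of $v$ minimising $w_t(u)$. A vertex is ''cleaned'' at the first time it is visited. A complete $k$-partite graph with parts $V_1,\dots,V_k$ has an edge between $u$ and $v$ iff they lie in different parts. The surplus $S_{w_0}(i)$ of part $V_i$ is the number of not-yet-cleaned vertices of $V_i$ at the first moment when all vertices of $V\setminus V_i$ have been cleaned (and $0$ if $V_i$ is fully cleaned by then). *)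

From HB Require Import structures.
From mathcomp Require Import all_boot all_order all_algebra.
Set Implicit Arguments. Unset Strict Implicit. Unset Printing Implicit Defensive.
Import Order.TTheory GRing.Theory Num.Theory.

(* Vertices: a finite type T; part : T -> 'I_k assigns each vertex to its part
   V_i = [set v | part v == i]. *)

Definition cmp_adj (T : finType) (k : nat) (part : T -> 'I_k) : rel T :=
  fun u v => part u != part v.

(* Initial weighting: a bijection w0 : T -> {-n, ..., -1}, n = #|T|
   (injective + range inside a set of size n = bijective). *)
Definition initial_weighting (T : finType) (w0 : T -> int) : Prop :=
  injective w0 /\ (forall v, (- Posz #|T| <= w0 v)%R /\ (w0 v <= -1)%R).

(* A run of the crawler is a sequence x : nat -> T, where x t is the vertex
   visited at time t >= 1 (x 0 is an irrelevant junk value). *)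

Definition cleaned_by (T : finType) (x : nat -> T) (t : nat) (u : T) : bool :=
  [exists s : 'I_t.+1, (0 < (s : nat))%N && (x s == u)].

(* last visit time of u up to time t (0 if never visited) *)
Definition last_visit (T : finType) (x : nat -> T) (t : nat) (u : T) : nat :=
  (\max_(s < t.+1 | (0 < (s : nat))%N && (x s == u)) (s : nat))%N.

Definition weight_at (T : finType) (w0 : T -> int) (x : nat -> T)
    (t : nat) (u : T) : int :=
  if (0 < last_visit x t u)%N then Posz (last_visit x t u) else w0 u.

Definition is_crawl (T : finType) (adj : rel T) (w0 : T -> int)
    (x : nat -> T) : Prop :=
  w0 (x 1%N) = (- Posz #|T|)%R /\
  forall t : nat, (1 <= t)%N ->
    adj (x t) (x t.+1) /\
    forall u, adj (x t) u -> (weight_at w0 x t (x t.+1) <= weight_at w0 x t u)%R.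

(* all vertices cleaned by time t, i.e. min_y w_t(y) > 0 *)
Definition all_cleaned (T : finType) (x : nat -> T) (t : nat) : bool :=
  [forall u, cleaned_by x t u].

Definition is_RC (T : finType) (x : nat -> T) (t : nat) : Prop :=
  all_cleaned x t /\ forall s, (s < t)%N -> ~~ all_cleaned x s.

Definition outside_cleaned (T : finType) (k : nat) (part : T -> 'I_k)
    (x : nat -> T) (i : 'I_k) (t : nat) : bool :=
  [forall u, (part u != i) ==> cleaned_by x t u].

Definition is_surplus (T : finType) (k : nat) (part : T -> 'I_k)
    (x : nat -> T) (i : 'I_k) (s : nat) : Prop :=
  exists tau : nat,
    outside_cleaned part x i tau /\
    (forall t, (t < tau)%N -> ~~ outside_cleaned part x i t) /\
    s = #|[set u | (part u == i) && ~~ cleaned_by x tau u]|.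

From HB Require Import structures.
From mathcomp Require Import all_boot all_order all_algebra.
From mathcomp Require Import zify.
Import Order.TTheory GRing.Theory Num.Theory.
Set Implicit Arguments. Unset Strict Implicit.

(* Unvisited vertices are exactly those of negative weight, so as long as the
   crawler has an unvisited neighbour it cleans a new vertex at every step.  Let
   t0 be the first time at which every unvisited vertex lies in the part V_j of
   the current vertex: t0 vertices have been cleaned one per step, V \ V_j was
   completed at time t0 - 1 with n - t0 + 1 vertices of V_j still unvisited, and
   every other part has surplus 0.  From t0 on the crawler alternates between a
   cleaned vertex outside V_j and a fresh vertex of V_j, so the remaining n - t0
   vertices take 2 (n - t0) more steps: RC = n + (n - t0) = n + S - 1. *)

Section Visits.
Variables (T : finType) (x : nat -> T).

Definition unvisited t : {set T} := [set u | ~~ cleaned_by x t u].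

Lemma cleaned_by0 u : cleaned_by x 0 u = false.
Proof. by apply/existsP => -[[[|s] //] ]. Qed.

Lemma cleaned_byS t u : cleaned_by x t.+1 u = cleaned_by x t u || (x t.+1 == u).
Proof.
apply/existsP/orP => [[s /andP[s_gt0 xs]]|].
  have := ltn_ord s; rewrite ltnS leq_eqVlt => /orP[/eqP s_eq|s_lt].
    by right; rewrite -s_eq.
  by left; apply/existsP; exists (Ordinal s_lt); rewrite s_gt0.
case=> [/existsP[s /andP[s_gt0 xs]]|xt].
  by exists (widen_ord (leqnSn _) s); rewrite s_gt0.
by exists ord_max.
Qed.

Lemma unvisited0 : unvisited 0 = setT.
Proof. by apply/setP => u; rewrite !inE cleaned_by0. Qed.

Lemma unvisitedS t : unvisited t.+1 = unvisited t :\ x t.+1.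
Proof. by apply/setP => u; rewrite !inE cleaned_byS negb_or andbC eq_sym. Qed.

Lemma card_unvisitedS t :
  #|unvisited t| = (x t.+1 \in unvisited t) + #|unvisited t.+1|.
Proof. by rewrite unvisitedS -cardsD1. Qed.

Lemma unvisited_mono s t : s <= t -> unvisited t \subset unvisited s.
Proof.
move=> le_st; apply/subsetP => u; rewrite !inE; apply: contra.
case/existsP=> r /andP[r_gt0 xr]; apply/existsP.
have r_lt : r < t.+1 by rewrite ltnS (leq_trans _ le_st) // -ltnS.
by exists (Ordinal r_lt); rewrite r_gt0.
Qed.

Lemma unvisited_before_fresh s t :
  x t \in unvisited t.-1 -> s < t -> x t \in unvisited s.
Proof.
move=> fresh lt_st; apply: subsetP fresh; apply: unvisited_mono.
by rewrite -ltnS (ltn_predK lt_st).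
Qed.

Lemma all_cleaned_unvisited t : all_cleaned x t = (unvisited t == set0).
Proof.
apply/forallP/eqP => [clean|empty u].
  by apply/setP => u; rewrite !inE clean.
by have := congr1 (fun A : {set T} => u \in A) empty; rewrite !inE => /negbFE.
Qed.

End Visits.

Section Weights.
Variables (T : finType) (w0 : T -> int) (x : nat -> T).

Lemma weight_at_gt0 t u : cleaned_by x t u -> (0 < weight_at w0 x t u)%R.
Proof.
case/existsP=> s /andP[s_gt0 xs].
have le_s_last : s <= last_visit x t u.
  by apply: (leq_bigmax_cond (P := fun r : 'I_t.+1 => (0 < r) && (x r == u)));
    rewrite s_gt0.
have last_gt0 := leq_trans s_gt0 le_s_last.
by rewrite /weight_at last_gt0 ltz_nat.
Qed.

Lemma weight_at_lt0 t u :
  initial_weighting w0 -> u \in unvisited x t -> (weight_at w0 x t u < 0)%R.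
Proof.
move=> [_ w0_range]; rewrite inE /weight_at => not_cleaned.
have -> : last_visit x t u = 0.
  rewrite /last_visit big_pred0 // => s; apply/negP => /andP[s_gt0 xs].
  by move/negP: not_cleaned; apply; apply/existsP; exists s; rewrite s_gt0.
by have [_ /le_lt_trans] := w0_range u; apply.
Qed.

Lemma eq_weight_at (y : nat -> T) t u :
  (forall s, s <= t -> x s = y s) -> weight_at w0 x t u = weight_at w0 y t u.
Proof.
move=> eq_xy; rewrite /weight_at /last_visit.
by under eq_bigl => s do rewrite (eq_xy s (ltnSE (ltn_ord s))).
Qed.

(* Cleaned vertices have positive weight and unvisited ones negative weight. *)
Lemma crawl_step_unvisited (adj : rel T) t u :
  initial_weighting w0 -> is_crawl adj w0 x -> 0 < t ->
  adj (x t) u -> u \in unvisited x t -> x t.+1 \in unvisited x t.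
Proof.
move=> w0_init [_ crawl] t_gt0 adj_u u_new.
have [_ /(_ u adj_u) le_next_u] := crawl t t_gt0.
rewrite inE; apply/negP => /weight_at_gt0 next_pos.
have := lt_le_trans next_pos (le_trans le_next_u (ltW (weight_at_lt0 w0_init u_new))).
by rewrite ltxx.
Qed.

End Weights.

Lemma initial_weighting_min (T : finType) (w0 : T -> int) :
  initial_weighting w0 -> 0 < #|T| -> exists v, w0 v = (- Posz #|T|)%R.
Proof.
move=> [w0_inj w0_range] n_gt0.
have w0E v : w0 v = (- Posz (`|w0 v|%N.-1).+1)%R.
  by have [? ?] := w0_range v; lia.
have abs_lt v : `|w0 v|%N.-1 < #|T| by have [? ?] := w0_range v; lia.
pose f v : 'I_#|T| := Ordinal (abs_lt v).
have f_inj : injective f.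
  by move=> a b /(congr1 val) /= eq_ab; apply: w0_inj; rewrite w0E eq_ab -w0E.
have /codomP[v /(congr1 val) /= fv] :=
  inj_card_onto f_inj (eq_leq (card_ord _)) (Ordinal (etrans (ltn_predL _) n_gt0)).
by exists v; rewrite w0E -fv prednK.
Qed.

Section CrawlConstruction.
Variables (T : finType) (adj : rel T) (w0 : T -> int) (nb : T -> T) (v1 : T).
Hypotheses (adj_nb : forall v, adj v (nb v)) (w0_v1 : w0 v1 = (- Posz #|T|)%R).

Definition crawl_next (y : nat -> T) t : T :=
  Order.arg_min (nb (y t)) (adj (y t)) (weight_at w0 y t).

(* [crawl_upto t] is a walk that agrees with the crawl at all times [s <= t.+1]. *)
Fixpoint crawl_upto t : nat -> T :=
  if t is t'.+1 then
    fun s => if s <= t then crawl_upto t' s else crawl_next (crawl_upto t') t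
  else fun _ => v1.

Definition crawl_of s := crawl_upto s s.

Lemma crawl_uptoD d s : crawl_upto (s + d) s = crawl_of s.
Proof.
elim: d => [|d IH]; first by rewrite addn0.
by rewrite addnS /= (leq_trans (leq_addr d s)) // addnC leqW.
Qed.

Lemma crawl_upto_agree t s : s <= t.+1 -> crawl_upto t s = crawl_of s.
Proof.
rewrite leq_eqVlt => /orP[/eqP ->|lt_st]; first by rewrite /crawl_of /= leqnn.
by rewrite -(subnKC (ltnSE lt_st)) crawl_uptoD.
Qed.

Lemma crawl_ofSS t : crawl_of t.+2 = crawl_next (crawl_upto t) t.+1.
Proof. by rewrite /crawl_of /= leqnn ltnn. Qed.

Lemma crawl_of_is_crawl : is_crawl adj w0 crawl_of.
Proof.
split=> // -[//|t] _.
have agree := @crawl_upto_agree t.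
rewrite crawl_ofSS /crawl_next agree //.
case: arg_minP => [|next adj_next next_min]; first exact: adj_nb.
split=> // u adj_u.
by rewrite !(eq_weight_at w0 _ (fun s le_st => esym (agree s le_st))) next_min.
Qed.

End CrawlConstruction.

Lemma crawl_exists (T : finType) (adj : rel T) (w0 : T -> int) :
  (forall v, exists u, adj v u) -> initial_weighting w0 -> 0 < #|T| ->
  exists x, is_crawl adj w0 x.
Proof.
move=> has_nb w0_init n_gt0; have [v1 w0_v1] := initial_weighting_min w0_init n_gt0.
by exists (crawl_of adj w0 (fun v => xchoose (has_nb v)) v1);
  apply: crawl_of_is_crawl => // v; apply: xchooseP.
Qed.

Section CleaningTimes.
Variables (T : finType) (k : nat) (part : T -> 'I_k) (x : nat -> T).

Lemma is_RC_last_fresh t :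
  unvisited x t = set0 -> x t \in unvisited x t.-1 -> is_RC x t.
Proof.
move=> empty fresh; split; first by rewrite all_cleaned_unvisited empty.
move=> s lt_st; rewrite all_cleaned_unvisited; apply/set0Pn; exists (x t).
exact: unvisited_before_fresh fresh lt_st.
Qed.

Lemma is_surplus_last_fresh i t :
  (forall u, u \in unvisited x t -> part u = i) -> part (x t) != i ->
  x t \in unvisited x t.-1 -> is_surplus part x i #|unvisited x t|.
Proof.
move=> unvisited_in_i xt_out fresh; exists t; split; last split.
- apply/forallP => u; apply/implyP => u_out.
  have : u \notin unvisited x t by apply: contra u_out => /unvisited_in_i ->.
  by rewrite inE negbK.
- move=> s lt_st; apply/forallPn; exists (x t); rewrite negb_imply xt_out /=.
  suff: x t \in unvisited x s by rewrite inE.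
  exact: unvisited_before_fresh fresh lt_st.
- apply: eq_card => u; rewrite !inE andb_idl // => u_new.
  by rewrite unvisited_in_i ?inE.
Qed.

End CleaningTimes.

Section CompleteMultipartiteCrawl.
Variables (T : finType) (k : nat) (part : T -> 'I_k) (w0 : T -> int) (x : nat -> T).
Hypotheses (w0_init : initial_weighting w0) (crawl : is_crawl (cmp_adj part) w0 x)
  (has_nb : forall v, exists u, part u != part v).

(* The crawler has no unvisited neighbour at time [t]. *)
Definition stuck t := [forall u, (u \in unvisited x t) ==> (part u == part (x t))].

Lemma crawl_part_neq t : 0 < t -> part (x t.+1) != part (x t).
Proof. by move=> t_gt0; have [_ /(_ t t_gt0)[]] := crawl; rewrite /cmp_adj eq_sym. Qed.

Lemma crawl_fresh_unstuck t : 0 < t -> ~~ stuck t -> x t.+1 \in unvisited x t.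
Proof.
move=> t_gt0 /forallPn[u]; rewrite negb_imply => /andP[u_new u_out].
by apply: (crawl_step_unvisited w0_init crawl t_gt0 _ u_new); rewrite /cmp_adj eq_sym.
Qed.

Lemma card_unvisited_unstuck t :
  (forall s, 0 < s < t -> ~~ stuck s) -> #|unvisited x t| = #|T| - t.
Proof.
elim: t => [|t IH] unstuck; first by rewrite unvisited0 cardsT subn0.
have fresh : x t.+1 \in unvisited x t.
  have [->|t_gt0] := posnP t; first by rewrite unvisited0 inE.
  by apply: (crawl_fresh_unstuck t_gt0 (unstuck t _)); rewrite t_gt0 ltnSn.
have card_t : #|unvisited x t| = #|T| - t.
  by apply: IH => s /andP[s_gt0 lt_st]; apply: unstuck; rewrite s_gt0 (ltn_trans lt_st).
by have := card_unvisitedS x t; rewrite fresh card_t add1n subnS => ->.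
Qed.

Lemma card_gt0_of_nb : 0 < #|T|.
Proof. by have [u _] := has_nb (x 0); apply/card_gt0P; exists u. Qed.

Lemma stuck_at_card : (forall s, 0 < s < #|T| -> ~~ stuck s) -> stuck #|T|.
Proof.
move=> /card_unvisited_unstuck; rewrite subnn => /cards0_eq empty.
by apply/forallP => u; rewrite empty inE.
Qed.

Lemma exists_stuck : exists t, (0 < t) && stuck t.
Proof.
have [/existsP[s /andP[s_gt0 stuck_s]]|] :=
  boolP [exists s : 'I_#|T|, (0 < s) && stuck s]; first by exists s; rewrite s_gt0.
rewrite negb_exists => /forallP none; exists #|T|.
rewrite card_gt0_of_nb stuck_at_card //.
by move=> s /andP[s_gt0 lt_s]; have := none (Ordinal lt_s); rewrite s_gt0.
Qed.

Lemma not_stuck1 : ~~ stuck 1.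
Proof.
have [u u_out] := has_nb (x 1); apply/forallPn; exists u; rewrite negb_imply u_out andbT.
by rewrite unvisitedS unvisited0 !inE andbT; apply: contraNneq u_out => ->.
Qed.

Section FirstStuckTime.
Variable t0 : nat.
Hypotheses (t0_gt0 : 0 < t0) (stuck_t0 : stuck t0)
  (t0_first : forall s, (0 < s) && stuck s -> t0 <= s).

Lemma unstuck_before_t0 s : 0 < s < t0 -> ~~ stuck s.
Proof.
case/andP=> s_gt0 lt_s; apply: contraL lt_s => stuck_s.
by rewrite -leqNgt t0_first ?s_gt0.
Qed.

Lemma t0_le_card : t0 <= #|T|.
Proof.
rewrite leqNgt; apply/negP => lt_card.
suff : t0 <= #|T| by rewrite leqNgt lt_card.
apply: t0_first; rewrite card_gt0_of_nb stuck_at_card // => s /andP[s_gt0 lt_s].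
by rewrite unstuck_before_t0 // s_gt0 (ltn_trans lt_s).
Qed.

Lemma card_unvisited_upto t : t <= t0 -> #|unvisited x t| = #|T| - t.
Proof.
move=> le_t; apply: card_unvisited_unstuck => s /andP[s_gt0 lt_s].
by rewrite unstuck_before_t0 // s_gt0 (leq_trans lt_s).
Qed.

Lemma fresh_upto s : 0 < s <= t0 -> x s \in unvisited x s.-1.
Proof.
case/andP=> s_gt0 le_s; have := card_unvisitedS x s.-1; rewrite prednK //.
have le_pred : s.-1 <= t0 := leq_trans (leq_pred s) le_s.
rewrite !card_unvisited_upto //.
have := t0_le_card; case: (_ \in _) => //=; lia.
Qed.

Lemma one_lt_t0 : 1 < t0.
Proof. by rewrite ltn_neqAle t0_gt0 andbT; apply: contraNneq not_stuck1 => ->. Qed.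

Lemma unvisited_after_t0 t u :
  t0 <= t -> u \in unvisited x t -> part u = part (x t0).
Proof.
move=> le_t /(subsetP (unvisited_mono x le_t)) u_new.
by move/forallP: stuck_t0 => /(_ u); rewrite u_new => /eqP.
Qed.

Lemma bounce_step t :
  t0 <= t -> part (x t) = part (x t0) -> unvisited x t != set0 ->
  [/\ x t.+2 \in unvisited x t.+1, part (x t.+2) = part (x t0)
    & #|unvisited x t.+2| = #|unvisited x t|.-1].
Proof.
move=> le_t xt_in /set0Pn[u u_new].
have t_gt0 : 0 < t := leq_trans t0_gt0 le_t.
have out_next : part (x t.+1) != part (x t0) by rewrite -xt_in crawl_part_neq.
have same : unvisited x t.+1 = unvisited x t.
  apply/setP => v; rewrite unvisitedS !inE andb_idl // => v_new.
  by apply: contra out_next => /eqP <-; rewrite (unvisited_after_t0 le_t) ?inE.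
have fresh : x t.+2 \in unvisited x t.+1.
  apply: (crawl_step_unvisited w0_init crawl (ltn0Sn t) _ (u := u)); last by rewrite same.
  by rewrite /cmp_adj (unvisited_after_t0 le_t u_new).
split=> //; first by apply: (unvisited_after_t0 _ fresh); rewrite leqW.
by have := card_unvisitedS x t.+1; rewrite fresh same => ->.
Qed.

Lemma bounce m : m <= #|T| - t0 ->
  [/\ x (t0 + m.*2) \in unvisited x (t0 + m.*2).-1,
      part (x (t0 + m.*2)) = part (x t0)
    & #|unvisited x (t0 + m.*2)| = #|T| - t0 - m].
Proof.
elim: m => [|m IH] le_m.
  rewrite double0 addn0 subn0 card_unvisited_upto //.
  by split=> //; apply: fresh_upto; rewrite t0_gt0 leqnn.
have [_ part_m card_m] := IH (ltnW le_m).
have nonempty : unvisited x (t0 + m.*2) != set0.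
  by rewrite -card_gt0 card_m subn_gt0.
have [fresh part_next card_next] := bounce_step (leq_addr _ _) part_m nonempty.
by rewrite doubleS !addnS card_next card_m subnS.
Qed.

Lemma crawl_RC : is_RC x (#|T| + (#|T| - t0)).
Proof.
have [fresh _ card_end] := bounce (leqnn _).
have -> : #|T| + (#|T| - t0) = t0 + (#|T| - t0).*2 by have := t0_le_card; lia.
by apply: is_RC_last_fresh fresh; apply: cards0_eq; rewrite card_end subnn.
Qed.

Lemma crawl_surplus i :
  is_surplus part x i (if i == part (x t0) then (#|T| - t0).+1 else 0).
Proof.
case: eqP => [->|/eqP ne_i]; last first.
  have [fresh part_end card_end] := bounce (leqnn _).
  rewrite subnn in card_end; rewrite -card_end.
  apply: is_surplus_last_fresh => [u||//]; last by rewrite part_end eq_sym.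
  by rewrite (cards0_eq card_end) inE.
have pred_t0_gt0 : 0 < t0.-1 by rewrite -ltnS prednK // one_lt_t0.
have -> : (#|T| - t0).+1 = #|unvisited x t0.-1|.
  by rewrite card_unvisited_upto ?leq_pred //; have := t0_le_card; lia.
apply: is_surplus_last_fresh.
- move=> u u_new; have [-> //|ne_u] := eqVneq u (x t0).
  apply: (unvisited_after_t0 (leqnn _)).
  by rewrite -{1}(prednK t0_gt0) unvisitedS prednK // in_setD1 ne_u.
- by have := crawl_part_neq pred_t0_gt0; rewrite prednK // eq_sym.
- by apply: fresh_upto; rewrite pred_t0_gt0 leq_pred.
Qed.

End FirstStuckTime.
End CompleteMultipartiteCrawl.

Lemma exists_other_part (T : finType) (k : nat) (part : T -> 'I_k) :
  1 < k -> (forall i, exists v, part v = i) -> forall v, exists u, part u != part v.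
Proof.
move=> k_gt1 onto v; pose i0 : 'I_k := Ordinal (ltnW k_gt1).
pose i1 : 'I_k := Ordinal k_gt1.
have [u part_u] := onto (if part v == i0 then i1 else i0).
by exists u; rewrite part_u; have [->|ne_v] := eqVneq (part v) i0; rewrite // eq_sym.
Qed.

Lemma big_if_eq (R : Type) (idx : R) (op : Monoid.law idx) (I : finType) (j : I) (a : R) :
  \big[op/idx]_(i : I) (if i == j then a else idx) = a.
Proof. by rewrite -big_mkcond big_pred1_eq. Qed.

Theorem mainTheorem4 (T : finType) (k : nat) (part : T -> 'I_k)
    (w0 : T -> int)
    (hk : (3 <= k)%N)
    (hparts : forall i : 'I_k, exists v : T, part v = i)
    (hw0 : initial_weighting w0) :
  (exists x : nat -> T, is_crawl (cmp_adj part) w0 x) /\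
  forall x : nat -> T, is_crawl (cmp_adj part) w0 x ->
    exists S : 'I_k -> nat,
      (forall i, is_surplus part x i (S i)) /\
      (exists j : 'I_k, (0 < S j)%N /\ forall i, i != j -> S i = 0%N) /\
      (\sum_(i < k) S i = \max_(i < k) S i)%N /\
      is_RC x (#|T| + \sum_(i < k) S i - 1)%N.
Proof.
have has_nb := exists_other_part (ltnW hk) hparts.
split.
  apply: crawl_exists hw0 _ => [v|].
    by have [u] := has_nb v; exists u; rewrite /cmp_adj eq_sym.
  by have [v _] := hparts (Ordinal (ltnW (ltnW hk))); apply/card_gt0P; exists v.
move=> x crawl.
have [t0 /andP[t0_gt0 stuck_t0] t0_first] := ex_minnP (exists_stuck hw0 crawl has_nb).
have surplus := crawl_surplus hw0 crawl has_nb t0_gt0 stuck_t0 t0_first.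
have RC := crawl_RC hw0 crawl has_nb t0_gt0 stuck_t0 t0_first.
exists (fun i => if i == part (x t0) then (#|T| - t0).+1 else 0); split=> //.
split; first by exists (part (x t0)); rewrite eqxx; split=> // i /negbTE ->.
by rewrite !big_if_eq addnS subn1.
Qed.
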